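(* On the 3-torus $P=\mathbb T^3=(\mathbb R/2\pi\mathbb Z)^3$ with coordinates $x,y,z$, the 1-form $\theta=\cos z\,dx+\sin z\,dy$ is a contact form (not regular), and the Lie algebra $\mathfrak X_{\mathrm{ex}}(P,\theta)$ of exact strict contact vector fields has codimension two in the Lie algebra $\mathfrak X(P,\theta)$ of strict contact vector fields. More precisely, $\mathfrak X(P,\theta)=\mathrm{Span}\{\partial_x,\partial_y\}\ltimes\mathfrak X_{\mathrm{ex}}(P,\theta)$, and the image of the flux map $X\mapsto[i_X\mu]$ restricted to $\mathfrak X(P,\theta)$ is the 2-dimensional subspace of $H^2(P,\mathbb R)$ spanned by $[dy\wedge dz]$ and $[dx\wedge dz]$.
   Context: $\mu=\frac12\theta\wedge d\theta$. $\mathfrak X(P,\theta)=\{X: L_X\theta=0\}$ and $\mathfrak X_{\mathrm{ex}}(P,\theta)=\{X\in\mathfrak X(P,\theta): i_X\mu\text{ is exact}\}$. *)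

(* Concrete model of the 3-torus T^3 = (R/2piZ)^3:
   smooth functions on T^3 are smooth 2pi-periodic functions on R^3;
   vector fields and forms are given by their coefficient functions in the
   global frame dx, dy, dz. *)
From Stdlib Require Import Reals ZArith List.
From Coquelicot Require Import Coquelicot.
Open Scope R_scope.

Inductive coord := cx | cy | cz.

Definition pt := (R * R * R)%type.

Definition get (p : pt) (i : coord) : R :=
  match i with cx => fst (fst p) | cy => snd (fst p) | cz => snd p end.

Definition upd (p : pt) (i : coord) (t : R) : pt :=
  match i with
  | cx => (t, snd (fst p), snd p)
  | cy => (fst (fst p), t, snd p)
  | cz => (fst (fst p), snd (fst p), t)
  end.

Definition partial (i : coord) (f : pt -> R) (p : pt) : R :=
  Derive (fun t => f (upd p i t)) (get p i).

Fixpoint iter_partial (l : list coord) (f : pt -> R) : pt -> R :=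
  match l with nil => f | i :: l' => partial i (iter_partial l' f) end.

Definition smooth (f : pt -> R) : Prop :=
  forall l : list coord,
    (forall p, continuous (iter_partial l f) p) /\
    (forall i p, ex_derive (fun t => iter_partial l f (upd p i t)) (get p i)).

Definition periodic (f : pt -> R) : Prop :=
  forall p i, f (upd p i (get p i + 2 * PI)) = f p.

Definition tfun (f : pt -> R) : Prop := smooth f /\ periodic f.

Definition vfield := coord -> pt -> R.
Definition form1 := coord -> pt -> R.
(* 2-forms w = w cx dy^dz + w cy dz^dx + w cz dx^dy *)
Definition form2 := coord -> pt -> R.
Definition form3 := pt -> R.

Definition is_vf (X : vfield) : Prop := forall i, tfun (X i).
Definition is_form1 (a : form1) : Prop := forall i, tfun (a i).

Definition sum3 (F : coord -> R) : R := F cx + F cy + F cz.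

Definition d1 (a : form1) : form2 := fun i p =>
  match i with
  | cx => partial cy (a cz) p - partial cz (a cy) p
  | cy => partial cz (a cx) p - partial cx (a cz) p
  | cz => partial cx (a cy) p - partial cy (a cx) p
  end.

Definition wedge12 (a : form1) (w : form2) : form3 := fun p =>
  sum3 (fun i => a i p * w i p).

Definition ins1 (X : vfield) (a : form1) : pt -> R := fun p =>
  sum3 (fun i => X i p * a i p).
Definition ins2 (X : vfield) (w : form2) : form1 := fun i p =>
  match i with
  | cx => w cy p * X cz p - w cz p * X cy p
  | cy => w cz p * X cx p - w cx p * X cz p
  | cz => w cx p * X cy p - w cy p * X cx p
  end.
Definition ins3 (X : vfield) (f : form3) : form2 := fun i p => f p * X i p.

Definition lie1 (X : vfield) (a : form1) : form1 := fun j p =>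
  sum3 (fun i => X i p * partial i (a j) p + a i p * partial j (X i) p).

Definition bracket (X Y : vfield) : vfield := fun j p =>
  sum3 (fun i => X i p * partial i (Y j) p - Y i p * partial i (X j) p).

Definition theta : form1 := fun i p =>
  match i with cx => cos (get p cz) | cy => sin (get p cz) | cz => 0 end.
Definition mu : form3 := fun p => / 2 * wedge12 theta (d1 theta) p.

Definition is_contact (a : form1) : Prop :=
  is_form1 a /\ forall p, wedge12 a (d1 a) p <> 0.

Definition exact2 (w : form2) : Prop :=
  exists a : form1, is_form1 a /\ forall i p, w i p = d1 a i p.
Definition strict_contact (X : vfield) : Prop :=
  is_vf X /\ forall j p, lie1 X theta j p = 0.
Definition exact_strict_contact (X : vfield) : Prop :=
  strict_contact X /\ exact2 (ins3 X mu).

Definition dX : vfield := fun i _ => match i with cx => 1 | _ => 0 end.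
Definition dY : vfield := fun i _ => match i with cy => 1 | _ => 0 end.
Definition dydz : form2 := fun i _ => match i with cx => 1 | _ => 0 end.
Definition dxdz : form2 := fun i _ => match i with cy => -1 | _ => 0 end.

Definition vlin (X : vfield) (a b : R) : vfield :=
  fun i p => X i p - a * dX i p - b * dY i p.
Definition flin (w : form2) (a b : R) : form2 :=
  fun i p => w i p - a * dydz i p - b * dxdz i p.

Definition is_reeb (Rb : vfield) : Prop :=
  is_vf Rb /\ (forall p, ins1 Rb theta p = 1) /\
  (forall i p, ins2 Rb (d1 theta) i p = 0).

(* some Reeb orbit is not closed in T^3 (this rules out regularity) *)
Definition has_nonclosed_reeb_orbit : Prop :=
  forall Rb, is_reeb Rb ->
  exists g : R -> pt,
    (forall t i, is_derive (fun s => get (g s) i) t (Rb i (g t))) /\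
    (forall t, t <> 0 -> exists i, forall k : Z,
        get (g t) i - get (g 0) i <> 2 * PI * IZR k).

From Pilot Require Import Defs.
From Stdlib Require Import Reals ZArith List.
From Coquelicot Require Import Coquelicot.
From Stdlib Require Import Lra Lia Classical FunctionalExtensionality.
Open Scope R_scope.

(* theta = cos z dx + sin z dy has d theta = -(cos z dy^dz + sin z dz^dx), so mu is the
   constant volume form -1/2 dx^dy^dz and the Reeb field is (cos z, sin z, 0), whose orbit at
   height pi/3 has irrational slope sqrt 3.

   For a strict contact field X, differentiating the three components of L_X theta = 0 and
   using the symmetry of second derivatives shows that X3 is constant along each Reeb line,
   while the transverse component -sin z X1 + cos z X2 grows along it with slope X3.
   Periodicity bounds that component along a sequence of times going to infinity, so X3 = 0,
   and then X1, X2 depend on z alone.  Hence i_X mu = -1/2 (X1 dy^dz + X2 dz^dx), which is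
   exact once the means of X1 and X2 (two constants) are removed: the periodic primitives of
   the mean-free parts give the primitive form.  Constant 2-forms are not exact, since
   integrating a constant curl over a period of the 2-torus gives zero. *)

Lemma upd_get p i : upd p i (get p i) = p.
Proof. destruct p as [[x y] z]; destruct i; reflexivity. Qed.

Lemma get_upd p i t : get (upd p i t) i = t.
Proof. destruct p as [[x y] z]; destruct i; reflexivity. Qed.

Lemma upd_upd p i s t : upd (upd p i s) i t = upd p i t.
Proof. destruct p as [[x y] z]; destruct i; reflexivity. Qed.

Lemma get_upd_neq p i j t : i <> j -> get (upd p j t) i = get p i.
Proof. destruct p as [[x y] z]; destruct i, j; simpl; congruence. Qed.

Lemma upd_swap p i j s t : i <> j -> upd (upd p i s) j t = upd (upd p j t) i s.
Proof. destruct p as [[x y] z]; destruct i, j; simpl; congruence. Qed.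

Lemma continuous_pair {U V W : UniformSpace} (f : U -> V) (g : U -> W) x :
  continuous f x -> continuous g x -> continuous (fun t => (f t, g t)) x.
Proof.
  intros Hf Hg. apply (continuous_comp_2 f g pair); auto.
  apply continuous_ext with (f := fun y => y); [intros [a b]; reflexivity|].
  apply continuous_id.
Qed.

Lemma continuous_upd {U : UniformSpace} (f : U -> pt) (g : U -> R) i x :
  continuous f x -> continuous g x -> continuous (fun w => upd (f w) i (g w)) x.
Proof.
  intros Hf Hg.
  assert (Hfst : continuous (fun w => fst (f w)) x)
    by (apply (continuous_comp f fst); [|apply continuous_fst]; auto).
  assert (H1 : continuous (fun w => fst (fst (f w))) x)
    by (apply (continuous_comp (fun w => fst (f w)) fst); [|apply continuous_fst]; auto).
  assert (H2 : continuous (fun w => snd (fst (f w))) x)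
    by (apply (continuous_comp (fun w => fst (f w)) snd); [|apply continuous_snd]; auto).
  assert (H3 : continuous (fun w => snd (f w)) x)
    by (apply (continuous_comp f snd); [|apply continuous_snd]; auto).
  destruct i; simpl; repeat apply continuous_pair; auto.
Qed.

Lemma continuous_line p i t : continuous (fun s => upd p i s) t.
Proof. apply continuous_upd; [apply continuous_const|apply continuous_id]. Qed.

Lemma continuity_2d_pt_comp (G : pt -> R) (h : R * R -> pt) a b :
  continuous h (a, b) -> continuous G (h (a, b)) ->
  continuity_2d_pt (fun u v => G (h (u, v))) a b.
Proof.
  intros Hh HG. apply continuity_2d_pt_filterlim.
  eapply filterlim_ext; [|exact (continuous_comp h G (a, b) Hh HG)].
  intros [u v]; reflexivity.
Qed.

Lemma partial_ext f g i p : (forall q, f q = g q) -> partial i f p = partial i g p.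
Proof. intros H; unfold partial; apply Derive_ext; intros; apply H. Qed.

Lemma partial_const c i p : partial i (fun _ => c) p = 0.
Proof. unfold partial; apply Derive_const. Qed.

Lemma iter_partial_app l i f :
  iter_partial l (partial i f) = iter_partial (l ++ i :: nil) f.
Proof. induction l as [|a l IH]; simpl; [reflexivity|now rewrite IH]. Qed.

Lemma smooth_partial f i : smooth f -> smooth (partial i f).
Proof. intros H l; rewrite iter_partial_app; apply H. Qed.

Lemma smooth_continuous f p : smooth f -> continuous f p.
Proof. intros H; apply (proj1 (H nil)). Qed.

Lemma smooth_ex_derive f i p :
  smooth f -> ex_derive (fun t => f (upd p i t)) (get p i).
Proof. intros H; apply (proj2 (H nil)). Qed.

Lemma smooth_is_derive f i p :
  smooth f -> is_derive (fun t => f (upd p i t)) (get p i) (partial i f p).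
Proof. intros H; apply Derive_correct, smooth_ex_derive, H. Qed.

Definition plane (p : pt) (i j : coord) (u v : R) : pt := upd (upd p i u) j v.

Section Plane.

Variables (p : pt) (i j : coord).
Hypothesis Hij : i <> j.

Lemma plane_get : plane p i j (get p i) (get p j) = p.
Proof. unfold plane. now rewrite !upd_get. Qed.

Lemma get_plane_l u v : get (plane p i j u v) i = u.
Proof. unfold plane. rewrite get_upd_neq, get_upd by auto. reflexivity. Qed.

Lemma get_plane_r u v : get (plane p i j u v) j = v.
Proof. apply get_upd. Qed.

Lemma upd_plane_l u v t : upd (plane p i j u v) i t = plane p i j t v.
Proof. unfold plane. rewrite (upd_swap p), upd_upd, <- upd_swap by auto. reflexivity. Qed.

Lemma upd_plane_r u v t : upd (plane p i j u v) j t = plane p i j u t.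
Proof. apply upd_upd. Qed.

Lemma Derive_plane_l g u v :
  Derive (fun t => g (plane p i j t v)) u = partial i g (plane p i j u v).
Proof. unfold partial. rewrite get_plane_l. apply Derive_ext; intros; now rewrite upd_plane_l. Qed.

Lemma Derive_plane_r g u v :
  Derive (fun t => g (plane p i j u t)) v = partial j g (plane p i j u v).
Proof. unfold partial. rewrite get_plane_r. apply Derive_ext; intros; now rewrite upd_plane_r. Qed.

Lemma ex_derive_plane_l g u v : smooth g -> ex_derive (fun t => g (plane p i j t v)) u.
Proof.
  intros Hg. assert (H := smooth_ex_derive g i (plane p i j u v) Hg). rewrite get_plane_l in H.
  eapply ex_derive_ext; [|exact H]. intros t; simpl. now rewrite upd_plane_l.
Qed.

Lemma ex_derive_plane_r g u v : smooth g -> ex_derive (fun t => g (plane p i j u t)) v.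
Proof.
  intros Hg. assert (H := smooth_ex_derive g j (plane p i j u v) Hg). rewrite get_plane_r in H.
  eapply ex_derive_ext; [|exact H]. intros t; simpl. now rewrite upd_plane_r.
Qed.

End Plane.

Lemma continuous_plane p i j w : continuous (fun w : R * R => plane p i j (fst w) (snd w)) w.
Proof.
  apply continuous_upd; [apply continuous_upd|];
    first [apply continuous_const | apply continuous_fst | apply continuous_snd].
Qed.

Lemma continuity_2d_plane g p i j u v :
  smooth g -> continuity_2d_pt (fun u v => g (plane p i j u v)) u v.
Proof.
  intros Hg. apply (continuity_2d_pt_comp g (fun w => plane p i j (fst w) (snd w))).
  - apply continuous_plane.
  - apply smooth_continuous, Hg.
Qed.

Lemma continuous_plane_l g p i j u v : smooth g -> continuous (fun t => g (plane p i j t v)) u.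
Proof.
  intros Hg. apply (continuous_comp (fun t => plane p i j t v)); [|apply smooth_continuous, Hg].
  apply continuous_upd; [apply continuous_line|apply continuous_const].
Qed.

Lemma partial_comm f i j p :
  smooth f -> partial i (partial j f) p = partial j (partial i f) p.
Proof.
  intros Hf. destruct (classic (i = j)) as [<-|Hij]; [reflexivity|].
  transitivity (Derive (fun u => Derive (fun v => f (plane p i j u v)) (get p j)) (get p i)).
  { rewrite <- (plane_get p i j) at 1 by auto. rewrite <- Derive_plane_l by auto.
    apply Derive_ext; intros; now rewrite Derive_plane_r. }
  transitivity (Derive (fun v => Derive (fun u => f (plane p i j u v)) (get p i)) (get p j)).
  2: { symmetry. rewrite <- (plane_get p i j) at 1 by auto. rewrite <- Derive_plane_r.
       apply Derive_ext; intros; now rewrite Derive_plane_l. }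
  apply Schwarz.
  - exists (mkposreal 1 Rlt_0_1); intros u v _ _. repeat split.
    + now apply ex_derive_plane_l.
    + now apply ex_derive_plane_r.
    + apply (ex_derive_ext (fun t => partial j f (plane p i j t v))).
      { intros; symmetry; apply Derive_plane_r. }
      apply ex_derive_plane_l, smooth_partial; auto.
    + apply (ex_derive_ext (fun t => partial i f (plane p i j u t))).
      { intros; symmetry; apply Derive_plane_l; auto. }
      apply ex_derive_plane_r, smooth_partial; auto.
  - apply (continuity_2d_pt_ext (fun u v => partial i (partial j f) (plane p i j u v))).
    + intros u v. rewrite <- Derive_plane_l by auto.
      apply Derive_ext; intros; symmetry; apply Derive_plane_r.
    + apply continuity_2d_plane, smooth_partial, smooth_partial, Hf.
  - apply (continuity_2d_pt_ext (fun u v => partial j (partial i f) (plane p i j u v))).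
    + intros u v. rewrite <- Derive_plane_r.
      apply Derive_ext; intros; symmetry; apply Derive_plane_l; auto.
    + apply continuity_2d_plane, smooth_partial, smooth_partial, Hf.
Qed.

Lemma iter_partial_lin f g k l p : smooth f -> smooth g ->
  iter_partial l (fun q => f q + k * g q) p = iter_partial l f p + k * iter_partial l g p.
Proof.
  intros Hf Hg. revert p; induction l as [|i l IH]; intros p; [reflexivity|]. simpl.
  rewrite (partial_ext _ (fun q => iter_partial l f q + k * iter_partial l g q)) by apply IH.
  unfold partial. rewrite Derive_plus, Derive_scal; [reflexivity| |].
  - apply (proj2 (Hf l)).
  - apply ex_derive_scal, (proj2 (Hg l)).
Qed.

Lemma partial_lin f g k i p : smooth f -> smooth g ->
  partial i (fun q => f q + k * g q) p = partial i f p + k * partial i g p.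
Proof. exact (iter_partial_lin f g k (i :: nil) p). Qed.

Lemma smooth_lin f g k : smooth f -> smooth g -> smooth (fun q => f q + k * g q).
Proof.
  intros Hf Hg l. split.
  - intros p. eapply continuous_ext; [intros q; symmetry; apply iter_partial_lin; auto|].
    apply (continuous_plus (iter_partial l f) (fun q => k * iter_partial l g q)).
    + apply (proj1 (Hf l)).
    + apply (continuous_mult (fun _ => k) (iter_partial l g));
        [apply continuous_const|apply (proj1 (Hg l))].
  - intros i p. eapply ex_derive_ext; [intros t; symmetry; apply iter_partial_lin; auto|].
    apply (ex_derive_plus (fun t => iter_partial l f (upd p i t))
                          (fun t => k * iter_partial l g (upd p i t))).
    + apply (proj2 (Hf l)).
    + apply ex_derive_scal, (proj2 (Hg l)).
Qed.

Lemma tfun_lin f g k : tfun f -> tfun g -> tfun (fun q => f q + k * g q).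
Proof.
  intros [Hf Pf] [Hg Pg]. split; [apply smooth_lin; auto|].
  intros p i. now rewrite Pf, Pg.
Qed.

Definition smooth1 (g : R -> R) : Prop :=
  forall n, (forall z, ex_derive (Derive_n g n) z) /\ (forall z, continuous (Derive_n g n) z).

Lemma smooth1_ext f g : (forall t, f t = g t) -> smooth1 f -> smooth1 g.
Proof.
  intros E H n. split; intros z.
  - eapply ex_derive_ext; [intros t; apply Derive_n_ext, E|apply H].
  - eapply continuous_ext; [intros t; apply Derive_n_ext, E|apply H].
Qed.

Lemma smooth1_trig a b c : smooth1 (fun t => a * cos t + b * sin t + c).
Proof.
  assert (Shape : forall n, exists a' b' c', forall z,
    Derive_n (fun t => a * cos t + b * sin t + c) n z = a' * cos z + b' * sin z + c').
  { induction n as [|n [a' [b' [c' IH]]]]; [exists a, b, c; reflexivity|].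
    exists b', (- a'), 0. intros z. simpl.
    rewrite (Derive_ext _ (fun t => a' * cos t + b' * sin t + c')) by apply IH.
    apply is_derive_unique. auto_derive; auto. ring. }
  intros n. destruct (Shape n) as [a' [b' [c' E]]]. split; intros z.
  - eapply ex_derive_ext; [intros t; symmetry; apply E|]. auto_derive; auto.
  - eapply continuous_ext; [intros t; symmetry; apply E|].
    apply (ex_derive_continuous (K := R_AbsRing) (V := R_NormedModule)). auto_derive; auto.
Qed.

Lemma smooth1_cos : smooth1 cos.
Proof.
  apply (smooth1_ext (fun t => 1 * cos t + 0 * sin t + 0)); [intros; ring|apply smooth1_trig].
Qed.

Lemma smooth1_sin : smooth1 sin.
Proof.
  apply (smooth1_ext (fun t => 0 * cos t + 1 * sin t + 0)); [intros; ring|apply smooth1_trig].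
Qed.

Lemma smooth1_const c : smooth1 (fun _ => c).
Proof.
  apply (smooth1_ext (fun t => 0 * cos t + 0 * sin t + c)); [intros; ring|apply smooth1_trig].
Qed.

Lemma iter_partial_zfun (g : R -> R) l : exists n k, forall p,
  iter_partial l (fun q => g (get q cz)) p = k * Derive_n g n (get p cz).
Proof.
  induction l as [|i l [n [k IH]]]; [exists 0%nat, 1; intros p; simpl; ring|].
  assert (E : forall p, iter_partial (i :: l) (fun q => g (get q cz)) p
                      = partial i (fun q => k * Derive_n g n (get q cz)) p)
    by (intros; apply partial_ext, IH).
  destruct i; [exists n, 0|exists n, 0|exists (S n), k]; intros [[x y] z]; rewrite E;
    unfold partial; simpl; [rewrite Derive_const; ring|rewrite Derive_const; ring|].
  apply Derive_scal.
Qed.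

Lemma smooth_zfun (g : R -> R) : smooth1 g -> smooth (fun p => g (get p cz)).
Proof.
  intros Hg l. destruct (iter_partial_zfun g l) as [n [k E]]. split.
  - intros p. eapply continuous_ext; [intros q; symmetry; apply E|].
    apply (continuous_mult (fun _ => k) (fun q : pt => Derive_n g n (get q cz)));
      [apply continuous_const|].
    apply (continuous_comp (fun q : pt => snd q)); [apply continuous_snd|apply Hg].
  - intros i [[x y] z]. eapply ex_derive_ext; [intros t; symmetry; apply E|].
    destruct i; simpl; [apply ex_derive_const|apply ex_derive_const|].
    apply ex_derive_scal, Hg.
Qed.

Lemma tfun_zfun (g : R -> R) :
  smooth1 g -> (forall t, g (t + 2 * PI) = g t) -> tfun (fun p => g (get p cz)).
Proof.
  intros Hg Hp. split; [apply smooth_zfun, Hg|].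
  intros [[x y] z] i. destruct i; simpl; auto.
Qed.

Lemma tfun_const c : tfun (fun _ => c).
Proof. apply (tfun_zfun (fun _ => c)); [apply smooth1_const|reflexivity]. Qed.

Lemma partial_zfun (g : R -> R) i x y z :
  partial i (fun p => g (get p cz)) ((x, y), z) = match i with cz => Derive g z | _ => 0 end.
Proof. unfold partial. destruct i; simpl; [apply Derive_const|apply Derive_const|reflexivity]. Qed.

Lemma smooth1_z_slice (G : pt -> R) x y : smooth G -> smooth1 (fun z => G ((x, y), z)).
Proof.
  intros HG.
  assert (E : forall n z, Derive_n (fun z => G ((x, y), z)) n z
                        = iter_partial (repeat cz n) G ((x, y), z)).
  { induction n as [|n IH]; intros z; [reflexivity|]. simpl.
    unfold partial; simpl. apply Derive_ext, IH. }
  intros n. split; intros z.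
  - eapply ex_derive_ext; [intros t; symmetry; apply E|].
    exact (proj2 (HG (repeat cz n)) cz ((x, y), z)).
  - eapply continuous_ext; [intros t; symmetry; apply E|].
    apply (continuous_comp (fun s => upd ((x, y), z) cz s)); [apply continuous_line|].
    apply (proj1 (HG (repeat cz n))).
Qed.

Lemma cos_period t : cos (t + 2 * PI) = cos t.
Proof. rewrite cos_plus, cos_2PI, sin_2PI. ring. Qed.

Lemma sin_period t : sin (t + 2 * PI) = sin t.
Proof. rewrite sin_plus, cos_2PI, sin_2PI. ring. Qed.

Lemma theta_form1 : is_form1 theta.
Proof.
  intros [| |].
  - exact (tfun_zfun cos smooth1_cos cos_period).
  - exact (tfun_zfun sin smooth1_sin sin_period).
  - exact (tfun_const 0).
Qed.

Lemma Derive_cos z : Derive cos z = - sin z.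
Proof. apply is_derive_unique, is_derive_cos. Qed.

Lemma Derive_sin z : Derive sin z = cos z.
Proof. apply is_derive_unique, is_derive_sin. Qed.

Lemma partial_theta i j x y z : partial i (theta j) ((x, y), z) =
  match i, j with cz, cx => - sin z | cz, cy => cos z | _, _ => 0 end.
Proof.
  unfold partial. destruct i, j; simpl;
    first [apply Derive_const | apply Derive_cos | apply Derive_sin].
Qed.

Lemma d1_theta i x y z : Defs.d1 theta i ((x, y), z) =
  match i with cx => - cos z | cy => - sin z | cz => 0 end.
Proof. destruct i; simpl; rewrite !partial_theta; ring. Qed.

Lemma mu_const p : mu p = - / 2.
Proof.
  destruct p as [[x y] z]. unfold mu, wedge12, sum3. rewrite !d1_theta. simpl.
  assert (H := sin2_cos2 z). unfold Rsqr in H. nra.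
Qed.

Lemma theta_contact : is_contact theta.
Proof.
  split; [apply theta_form1|]. intros p.
  assert (H := mu_const p). unfold mu in H. lra.
Qed.

Lemma rotation_kernel z a b :
  - sin z * a + cos z * b = 0 -> cos z * a + sin z * b = 0 -> a = 0 /\ b = 0.
Proof.
  intros H1 H2. assert (H := sin2_cos2 z). unfold Rsqr in H.
  assert (Ea : (sin z * sin z + cos z * cos z) * a
             = cos z * (cos z * a + sin z * b) - sin z * (- sin z * a + cos z * b)) by ring.
  assert (Eb : (sin z * sin z + cos z * cos z) * b
             = sin z * (cos z * a + sin z * b) + cos z * (- sin z * a + cos z * b)) by ring.
  rewrite H, H1, H2 in Ea, Eb. lra.
Qed.

Lemma is_derive_zero_const (f : R -> R) : (forall t, is_derive f t 0) -> forall a b, f a = f b.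
Proof.
  intros H a b.
  destruct (MVT_gen f a b (fun _ => 0)) as [c [_ Hc]]; [intros; apply H| |lra].
  intros t _. apply continuity_pt_filterlim, (ex_derive_continuous f t (ex_intro _ 0 (H t))).
Qed.

Lemma MVT_Derive (f : R -> R) a b : (forall w, ex_derive f w) ->
  exists c, Rmin a b <= c <= Rmax a b /\ f b - f a = Derive f c * (b - a).
Proof.
  intros H. apply (MVT_gen f a b (Derive f)).
  - intros w _. apply Derive_correct, H.
  - intros w _. apply continuity_pt_filterlim, (ex_derive_continuous f w (H w)).
Qed.

Lemma Rabs_between a b c d : Rmin a b <= c <= Rmax a b -> Rabs (b - a) < d -> Rabs (c - a) < d.
Proof.
  intros [H1 H2] H. unfold Rmin, Rmax in *. destruct (Rle_dec a b);
    apply Rabs_def2 in H; destruct H; apply Rabs_def1; lra.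
Qed.

Lemma differentiable_pt_lim_C1 (F : R -> R -> R) x y :
  (forall u v, ex_derive (fun w => F w v) u) ->
  (forall u v, ex_derive (fun w => F u w) v) ->
  continuity_2d_pt (fun u v => Derive (fun w => F w v) u) x y ->
  continuity_2d_pt (fun u v => Derive (fun w => F u w) v) x y ->
  differentiable_pt_lim F x y (Derive (fun w => F w y) x) (Derive (fun w => F x w) y).
Proof.
  intros H1 H2 C1 C2 eps.
  assert (He : 0 < eps / 2) by (destruct eps; simpl; lra).
  destruct (C1 (mkposreal _ He)) as [d1 Hd1]. destruct (C2 (mkposreal _ He)) as [d2 Hd2].
  assert (Hd : 0 < Rmin d1 d2) by (apply Rmin_pos; [destruct d1|destruct d2]; auto).
  exists (mkposreal _ Hd). simpl. intros u v Hu Hv.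
  assert (Hu1 : Rabs (u - x) < d1) by (eapply Rlt_le_trans; [apply Hu|apply Rmin_l]).
  assert (Hv1 : Rabs (v - y) < d1) by (eapply Rlt_le_trans; [apply Hv|apply Rmin_l]).
  assert (Hv2 : Rabs (v - y) < d2) by (eapply Rlt_le_trans; [apply Hv|apply Rmin_r]).
  destruct (MVT_Derive (fun w => F w v) x u (fun w => H1 w v)) as [xi [Hxi Exi]].
  destruct (MVT_Derive (fun w => F x w) y v (fun w => H2 x w)) as [eta [Heta Eeta]].
  set (e1 := Derive (fun w => F w v) xi - Derive (fun w => F w y) x).
  set (e2 := Derive (fun w => F x w) eta - Derive (fun w => F x w) y).
  assert (A1 : Rabs e1 < eps / 2) by (apply (Hd1 xi v); [eapply Rabs_between|]; eauto).
  assert (A2 : Rabs e2 < eps / 2).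
  { apply (Hd2 x eta); [rewrite Rminus_diag, Rabs_R0; destruct d2; auto|].
    eapply Rabs_between; eauto. }
  replace (F u v - F x y
           - (Derive (fun w => F w y) x * (u - x) + Derive (fun w => F x w) y * (v - y)))
    with (e1 * (u - x) + e2 * (v - y)) by (unfold e1, e2; lra).
  eapply Rle_trans; [apply Rabs_triang|]. rewrite !Rabs_mult.
  assert (M1 := Rmax_l (Rabs (u - x)) (Rabs (v - y))).
  assert (M2 := Rmax_r (Rabs (u - x)) (Rabs (v - y))).
  assert (P1 := Rabs_pos (u - x)). assert (P2 := Rabs_pos (v - y)).
  assert (Q1 := Rabs_pos e1). assert (Q2 := Rabs_pos e2).
  set (m := Rmax (Rabs (u - x)) (Rabs (v - y))) in *.
  apply Rle_trans with (eps / 2 * m + eps / 2 * m); [|lra].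
  apply Rplus_le_compat; apply Rmult_le_compat; lra.
Qed.

Lemma is_derive_line G x0 y0 z c s t : smooth G ->
  let p := ((x0 + c * t, y0 + s * t), z) in
  is_derive (fun t => G ((x0 + c * t, y0 + s * t), z)) t
    (c * partial cx G p + s * partial cy G p).
Proof.
  intros HG p. set (F u v := G ((u, v), z)).
  assert (Cont : forall i u v, continuity_2d_pt (fun u v => partial i G ((u, v), z)) u v)
    by (intros; exact (continuity_2d_plane _ ((0, 0), z) cx cy _ _ (smooth_partial G i HG))).
  apply is_derive_Reals.
  replace (c * partial cx G p + s * partial cy G p)
    with (Derive (fun w => F w (y0 + s * t)) (x0 + c * t) * c
          + Derive (fun w => F (x0 + c * t) w) (y0 + s * t) * s)
    by (unfold p, partial, F; simpl; ring).
  apply (derivable_pt_lim_comp_2d F (fun t => x0 + c * t) (fun t => y0 + s * t)).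
  - apply differentiable_pt_lim_C1.
    + intros u v. exact (smooth_ex_derive G cx ((u, v), z) HG).
    + intros u v. exact (smooth_ex_derive G cy ((u, v), z) HG).
    + apply (Cont cx).
    + apply (Cont cy).
  - apply is_derive_Reals. auto_derive; auto; ring.
  - apply is_derive_Reals. auto_derive; auto; ring.
Qed.

Lemma periodic_line_shift (f : pt -> R) p i (k : Z) :
  periodic f -> f (upd p i (get p i + 2 * PI * IZR k)) = f p.
Proof.
  intros Hf.
  assert (Step : forall t, f (upd p i (t + 2 * PI)) = f (upd p i t))
    by (intros t; rewrite <- (Hf (upd p i t) i), upd_upd, get_upd; reflexivity).
  assert (Nat : forall (n : nat) t, f (upd p i (t + 2 * PI * INR n)) = f (upd p i t)).
  { induction n as [|n IH]; intros t; [simpl; now rewrite Rmult_0_r, Rplus_0_r|].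
    rewrite S_INR. replace (t + 2 * PI * (INR n + 1)) with (t + 2 * PI * INR n + 2 * PI) by ring.
    rewrite Step. apply IH. }
  transitivity (f (upd p i (get p i))); [|now rewrite upd_get].
  destruct (Z_le_gt_dec 0 k) as [Hk|Hk].
  - rewrite <- (Z2Nat.id k), <- INR_IZR_INZ by lia. apply Nat.
  - rewrite <- (Nat (Z.to_nat (- k))), INR_IZR_INZ, Z2Nat.id, opp_IZR by lia.
    f_equal. f_equal. ring.
Qed.

Lemma tfun_bounded_line G p i : tfun G -> exists M, forall t, Rabs (G (upd p i t)) <= M.
Proof.
  intros [HG HP].
  assert (HPI := PI_RGT_0).
  assert (Hc : forall t, continuity_pt (fun t => Rabs (G (upd p i t))) t).
  { intros t. apply continuity_pt_filterlim.
    apply (continuous_comp (fun t => G (upd p i t)) Rabs).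
    - apply (continuous_comp (fun s => upd p i s));
        [apply continuous_line|apply smooth_continuous, HG].
    - apply continuous_Rabs. }
  destruct (continuity_ab_maj _ 0 (2 * PI) ltac:(lra) (fun t _ => Hc t)) as [m [Hm _]].
  exists (Rabs (G (upd p i m))). intros t.
  destruct (archimed (t / (2 * PI))) as [H1 H2].
  set (k := (up (t / (2 * PI)) - 1)%Z).
  assert (Hk : 0 <= t - 2 * PI * IZR k <= 2 * PI).
  { unfold k. rewrite minus_IZR.
    assert (E : t = 2 * PI * (t / (2 * PI))) by (field; lra).
    split; [|apply Rmult_lt_compat_l with (r := 2 * PI) in H1; lra].
    apply Rmult_le_compat_l with (r := 2 * PI) in H2; lra. }
  replace (G (upd p i t)) with (G (upd p i (t - 2 * PI * IZR k))).
  { apply (Hm (t - 2 * PI * IZR k)). lra. }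
  rewrite <- (periodic_line_shift G (upd p i (t - 2 * PI * IZR k)) i k HP), upd_upd, get_upd.
  f_equal. f_equal. ring.
Qed.

Lemma affine_bounded_slope (h : R -> R) kap T M : T <> 0 ->
  (forall t, h t = h 0 + kap * t) -> (forall n : nat, Rabs (h (INR n * T)) <= M) -> kap = 0.
Proof.
  intros HT Hh HM. destruct (Req_dec kap 0) as [|Hk]; auto. exfalso.
  assert (Ha : 0 < Rabs (kap * T)) by (apply Rabs_pos_lt, Rmult_integral_contrapositive; auto).
  set (r := (M + Rabs (h 0)) / Rabs (kap * T)).
  destruct (archimed r) as [H1 _].
  assert (Hu : (0 <= up r)%Z).
  { apply le_IZR. assert (0 <= r); [|lra].
    unfold r. apply Rdiv_le_0_compat; [|lra].
    specialize (HM 0%nat). simpl in HM. rewrite Rmult_0_l in HM.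
    assert (Rabs (h 0) >= 0) by apply Rle_ge, Rabs_pos. lra. }
  specialize (HM (Z.to_nat (up r))).
  rewrite INR_IZR_INZ, Z2Nat.id, Hh in HM by auto.
  assert (E : r * Rabs (kap * T) = M + Rabs (h 0)) by (unfold r; field; lra).
  assert (Big : IZR (up r) * Rabs (kap * T) > r * Rabs (kap * T)) by (apply Rmult_gt_compat_r; lra).
  assert (R1 : Rabs (kap * (IZR (up r) * T)) = IZR (up r) * Rabs (kap * T)).
  { replace (kap * (IZR (up r) * T)) with (IZR (up r) * (kap * T)) by ring.
    rewrite Rabs_mult, Rabs_right; [reflexivity|apply Rle_ge, IZR_le, Hu]. }
  assert (Tri := Rabs_triang_inv (kap * (IZR (up r) * T)) (- h 0)).
  replace (kap * (IZR (up r) * T) - - h 0) with (h 0 + kap * (IZR (up r) * T)) in Tri by ring.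
  rewrite Rabs_Ropp, R1 in Tri. lra.
Qed.

Definition reeb_line (x0 y0 z t : R) : pt := ((x0 + cos z * t, y0 + sin z * t), z).

Definition transverse (f1 f2 : pt -> R) (x0 y0 z t : R) : R :=
  - sin z * f1 (reeb_line x0 y0 z t) + cos z * f2 (reeb_line x0 y0 z t).

(* A line of direction (cos z, sin z) meets the translates of the line x = x0 (or y = y0
   when cos z = 0) at the times n T, where the transverse component stays bounded. *)
Lemma transverse_affine_slope_zero f1 f2 x0 y0 z kap : tfun f1 -> tfun f2 ->
  (forall t, transverse f1 f2 x0 y0 z t = transverse f1 f2 x0 y0 z 0 + kap * t) -> kap = 0.
Proof.
  intros Hf1 Hf2 Haff. pose proof (proj2 Hf1) as P1. pose proof (proj2 Hf2) as P2.
  assert (HPI := PI_RGT_0).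
  set (c := cos z) in *. set (s := sin z) in *.
  assert (Hcs : c * c + s * s = 1) by (unfold c, s; rewrite <- (sin2_cos2 z); unfold Rsqr; ring).
  set (L := reeb_line x0 y0 z).
  assert (Bnd : forall M1 M2 t q1 q2, Rabs (f1 q1) <= M1 -> Rabs (f2 q2) <= M2 ->
    f1 (L t) = f1 q1 -> f2 (L t) = f2 q2 -> Rabs (transverse f1 f2 x0 y0 z t) <= M1 + M2).
  { intros M1 M2 t q1 q2 H1 H2 E1 E2. unfold transverse. fold c s L. rewrite E1, E2.
    assert (Rabs s <= 1) by (apply Rabs_le; unfold s; split; apply SIN_bound).
    assert (Rabs c <= 1) by (apply Rabs_le; unfold c; split; apply COS_bound).
    eapply Rle_trans; [apply Rabs_triang|]. rewrite !Rabs_mult, Rabs_Ropp.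
    assert (0 <= Rabs (f1 q1)) by apply Rabs_pos. assert (0 <= Rabs (f2 q2)) by apply Rabs_pos.
    nra. }
  destruct (Req_dec c 0) as [Hc|Hc].
  - assert (Hs : s <> 0) by (intros Hs; rewrite Hc, Hs in Hcs; lra).
    apply (affine_bounded_slope (transverse f1 f2 x0 y0 z) kap (2 * PI / s)
             (Rabs (f1 (L 0)) + Rabs (f2 (L 0))));
      [unfold Rdiv; apply Rmult_integral_contrapositive; split; [lra|apply Rinv_neq_0_compat; auto]
      |exact Haff|].
    intros n. set (t := INR n * (2 * PI / s)).
    assert (Lq : forall f, periodic f -> f (L t) = f (L 0)).
    { intros f Hf. rewrite <- (periodic_line_shift f (L 0) cy (Z.of_nat n) Hf).
      unfold L, reeb_line, t; simpl. fold c s. rewrite <- INR_IZR_INZ, Hc.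
      replace (x0 + 0 * 0) with (x0 + 0 * (INR n * (2 * PI / s))) by ring.
      replace (y0 + s * 0 + 2 * PI * INR n) with (y0 + s * (INR n * (2 * PI / s))) by (field; auto).
      reflexivity. }
    apply (Bnd _ _ t (L 0) (L 0)); [apply Rle_refl|apply Rle_refl|apply Lq, P1|apply Lq, P2].
  - destruct (tfun_bounded_line f1 ((x0, y0), z) cy Hf1) as [M1 HM1].
    destruct (tfun_bounded_line f2 ((x0, y0), z) cy Hf2) as [M2 HM2].
    apply (affine_bounded_slope (transverse f1 f2 x0 y0 z) kap (2 * PI / c) (M1 + M2));
      [unfold Rdiv; apply Rmult_integral_contrapositive; split; [lra|apply Rinv_neq_0_compat; auto]
      |exact Haff|].
    intros n. set (t := INR n * (2 * PI / c)).
    set (q := upd ((x0, y0), z) cy (y0 + s * t)).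
    assert (Lq : forall f, periodic f -> f (L t) = f q).
    { intros f Hf. rewrite <- (periodic_line_shift f q cx (Z.of_nat n) Hf).
      unfold L, reeb_line, q; simpl. fold c s. rewrite <- INR_IZR_INZ.
      replace (x0 + c * t) with (x0 + 2 * PI * INR n) by (unfold t; field; auto).
      reflexivity. }
    apply (Bnd _ _ t q q); [apply HM1|apply HM2|apply Lq, P1|apply Lq, P2].
Qed.

Lemma is_derive_lin2 (f g : R -> R) a b x df dg : is_derive f x df -> is_derive g x dg ->
  is_derive (fun t => a * f t + b * g t) x (a * df + b * dg).
Proof.
  intros Hf Hg.
  exact (is_derive_plus _ _ x _ _ (is_derive_scal f x a df Hf) (is_derive_scal g x b dg Hg)).
Qed.

(** * Strict contact vector fields *)

Lemma ex_derive_zfun_line (a : R -> R) p i :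
  (forall t, ex_derive a t) -> ex_derive (fun t => a (get (upd p i t) cz)) (get p i).
Proof. intros Ha. destruct p as [[x y] z], i; simpl; auto using ex_derive_const. Qed.

Lemma partial_zcomb_zero (a b c : R -> R) (A B C : pt -> R) i p :
  (forall t, ex_derive a t) -> (forall t, ex_derive b t) -> (forall t, ex_derive c t) ->
  smooth A -> smooth B -> smooth C ->
  (forall q, a (get q cz) * A q + b (get q cz) * B q + c (get q cz) * C q = 0) ->
  partial i (fun q => a (get q cz)) p * A p + a (get p cz) * partial i A p
  + (partial i (fun q => b (get q cz)) p * B p + b (get p cz) * partial i B p)
  + (partial i (fun q => c (get q cz)) p * C p + c (get p cz) * partial i C p) = 0.
Proof.
  intros Ha Hb Hc HA HB HC H.
  assert (Z : partial i (fun q => a (get q cz) * A q + b (get q cz) * B q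
                                 + c (get q cz) * C q) p = 0)
    by (rewrite (partial_ext _ (fun _ => 0)) by apply H; apply partial_const).
  unfold partial in Z |- *. rewrite <- Z.
  set (La t := a (get (upd p i t) cz)). set (Lb t := b (get (upd p i t) cz)).
  set (Lc t := c (get (upd p i t) cz)).
  set (LA t := A (upd p i t)). set (LB t := B (upd p i t)). set (LC t := C (upd p i t)).
  assert (Ea : ex_derive La (get p i)) by apply ex_derive_zfun_line, Ha.
  assert (Eb : ex_derive Lb (get p i)) by apply ex_derive_zfun_line, Hb.
  assert (Ec : ex_derive Lc (get p i)) by apply ex_derive_zfun_line, Hc.
  assert (EA : ex_derive LA (get p i)) by apply smooth_ex_derive, HA.
  assert (EB : ex_derive LB (get p i)) by apply smooth_ex_derive, HB.
  assert (EC : ex_derive LC (get p i)) by apply smooth_ex_derive, HC.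
  rewrite (Derive_plus (fun t => La t * LA t + Lb t * LB t) (fun t => Lc t * LC t)),
    (Derive_plus (fun t => La t * LA t) (fun t => Lb t * LB t)), !Derive_mult;
    auto using ex_derive_mult, ex_derive_plus.
  unfold La, Lb, Lc, LA, LB, LC. rewrite !upd_get. reflexivity.
Qed.

Lemma ex_derive_opp_sin t : ex_derive (fun s => - sin s) t.
Proof. auto_derive; auto. Qed.

Lemma ex_derive_cos t : ex_derive cos t.
Proof. auto_derive; auto. Qed.

Lemma ex_derive_sin t : ex_derive sin t.
Proof. auto_derive; auto. Qed.

Section StrictContact.

Variable X : vfield.
Hypothesis HX : strict_contact X.

Let Xs i : smooth (X i) := proj1 (proj1 HX i).
Let Xsp i j : smooth (partial j (X i)) := smooth_partial _ j (Xs i).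

Lemma strict_eq_x q : - sin (get q cz) * X cz q + cos (get q cz) * partial cx (X cx) q
  + sin (get q cz) * partial cx (X cy) q = 0.
Proof.
  destruct q as [[x y] z]. transitivity (lie1 X theta cx ((x, y), z)); [|apply HX].
  unfold lie1, sum3. rewrite !partial_theta. simpl. ring.
Qed.

Lemma strict_eq_y q : cos (get q cz) * X cz q + cos (get q cz) * partial cy (X cx) q
  + sin (get q cz) * partial cy (X cy) q = 0.
Proof.
  destruct q as [[x y] z]. transitivity (lie1 X theta cy ((x, y), z)); [|apply HX].
  unfold lie1, sum3. rewrite !partial_theta. simpl. ring.
Qed.

Lemma strict_eq_z q : cos (get q cz) * partial cz (X cx) q + sin (get q cz) * partial cz (X cy) q
  + 0 * X cz q = 0.
Proof.
  destruct q as [[x y] z]. transitivity (lie1 X theta cz ((x, y), z)); [|apply HX].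
  unfold lie1, sum3. rewrite !partial_theta. simpl. ring.
Qed.

Lemma strict_rot_x x y z : let p := ((x, y), z) in
  - sin z * partial cx (X cx) p + cos z * partial cx (X cy) p
  = cos z * X cz p + sin z * partial cz (X cz) p.
Proof.
  intros p.
  assert (H1 := partial_zcomb_zero _ _ _ _ _ _ cz p ex_derive_opp_sin ex_derive_cos
    ex_derive_sin (Xs cz) (Xsp cx cx) (Xsp cy cx) strict_eq_x).
  assert (H2 := partial_zcomb_zero _ _ _ _ _ _ cx p ex_derive_cos ex_derive_sin
    (ex_derive_const 0) (Xsp cx cz) (Xsp cy cz) (Xs cz) strict_eq_z).
  unfold p in *. rewrite (partial_zfun (fun t => - sin t)), !partial_zfun, Derive_opp,
    Derive_cos, Derive_sin in H1.
  rewrite !partial_zfun, partial_const in H2.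
  rewrite (partial_comm (X cx)), (partial_comm (X cy)) in H2 by apply Xs.
  cbn [get fst snd] in H1, H2. lra.
Qed.

Lemma strict_rot_y x y z : let p := ((x, y), z) in
  - sin z * partial cy (X cx) p + cos z * partial cy (X cy) p
  = sin z * X cz p - cos z * partial cz (X cz) p.
Proof.
  intros p.
  assert (H1 := partial_zcomb_zero _ _ _ _ _ _ cz p ex_derive_cos ex_derive_cos
    ex_derive_sin (Xs cz) (Xsp cx cy) (Xsp cy cy) strict_eq_y).
  assert (H2 := partial_zcomb_zero _ _ _ _ _ _ cy p ex_derive_cos ex_derive_sin
    (ex_derive_const 0) (Xsp cx cz) (Xsp cy cz) (Xs cz) strict_eq_z).
  unfold p in *. rewrite !partial_zfun, Derive_cos, Derive_sin in H1.
  rewrite !partial_zfun, partial_const in H2.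
  rewrite (partial_comm (X cx)), (partial_comm (X cy)) in H2 by apply Xs.
  cbn [get fst snd] in H1, H2. lra.
Qed.

Lemma strict_reeb_X3 x y z : let p := ((x, y), z) in
  cos z * partial cx (X cz) p + sin z * partial cy (X cz) p = 0.
Proof.
  intros p.
  assert (H1 := partial_zcomb_zero _ _ _ _ _ _ cy p ex_derive_opp_sin ex_derive_cos
    ex_derive_sin (Xs cz) (Xsp cx cx) (Xsp cy cx) strict_eq_x).
  assert (H2 := partial_zcomb_zero _ _ _ _ _ _ cx p ex_derive_cos ex_derive_cos
    ex_derive_sin (Xs cz) (Xsp cx cy) (Xsp cy cy) strict_eq_y).
  unfold p in *. rewrite (partial_zfun (fun t => - sin t)), !partial_zfun in H1.
  rewrite !partial_zfun in H2.
  rewrite (partial_comm (X cx)), (partial_comm (X cy)) in H2 by apply Xs.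
  cbn [get fst snd] in H1, H2. lra.
Qed.

Lemma strict_X3_reeb_line x0 y0 z t : X cz (reeb_line x0 y0 z t) = X cz ((x0, y0), z).
Proof.
  replace ((x0, y0), z) with (reeb_line x0 y0 z 0) by (unfold reeb_line; f_equal; f_equal; ring).
  apply (is_derive_zero_const (fun t => X cz (reeb_line x0 y0 z t))). intros u.
  assert (D := is_derive_line (X cz) x0 y0 z (cos z) (sin z) u (Xs cz)).
  cbv zeta in D. rewrite strict_reeb_X3 in D. exact D.
Qed.

Lemma strict_transverse_affine x0 y0 z t :
  transverse (X cx) (X cy) x0 y0 z t = transverse (X cx) (X cy) x0 y0 z 0 + X cz ((x0, y0), z) * t.
Proof.
  set (h := transverse (X cx) (X cy) x0 y0 z). set (kap := X cz ((x0, y0), z)).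
  enough (E : h t - kap * t = h 0 - kap * 0) by lra.
  apply (is_derive_zero_const (fun t => h t - kap * t)). intros u.
  assert (D := is_derive_minus _ _ u _ _
    (is_derive_lin2 _ _ (- sin z) (cos z) u _ _
       (is_derive_line (X cx) x0 y0 z (cos z) (sin z) u (Xs cx))
       (is_derive_line (X cy) x0 y0 z (cos z) (sin z) u (Xs cy)))
    (is_derive_scal (fun t => t) u kap 1 (is_derive_id u))).
  match type of D with is_derive _ _ ?v => replace 0 with v; [exact D|] end.
  assert (A := strict_rot_x (x0 + cos z * u) (y0 + sin z * u) z).
  assert (B := strict_rot_y (x0 + cos z * u) (y0 + sin z * u) z).
  assert (K := strict_X3_reeb_line x0 y0 z u).
  assert (S := sin2_cos2 z). unfold Rsqr in S.
  cbv zeta in A, B. unfold reeb_line in K. fold kap in K. rewrite K in A, B.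
  unfold minus, plus, opp; simpl.
  set (P := (x0 + cos z * u, y0 + sin z * u, z)) in *.
  transitivity (cos z * (- sin z * partial cx (X cx) P + cos z * partial cx (X cy) P)
    + sin z * (- sin z * partial cy (X cx) P + cos z * partial cy (X cy) P) - kap * 1); [ring|].
  rewrite A, B. replace kap with ((sin z * sin z + cos z * cos z) * kap) at 3 by (rewrite S; ring).
  ring.
Qed.

Lemma strict_X3_zero p : X cz p = 0.
Proof.
  destruct p as [[x0 y0] z].
  apply (transverse_affine_slope_zero (X cx) (X cy) x0 y0 z); [apply HX|apply HX|].
  apply strict_transverse_affine.
Qed.

Lemma strict_partial_xy_zero i j p : j <> cz -> partial j (X i) p = 0.
Proof.
  intros Hj. destruct p as [[x y] z]. set (p := ((x, y), z)).
  assert (D3 : forall k q, partial k (X cz) q = 0)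
    by (intros; rewrite (partial_ext _ (fun _ => 0)) by apply strict_X3_zero; apply partial_const).
  assert (Ax := strict_rot_x x y z). assert (Ay := strict_rot_y x y z).
  assert (Ex := strict_eq_x p). assert (Ey := strict_eq_y p).
  cbv zeta in Ax, Ay. fold p in Ax, Ay. simpl get in Ex, Ey.
  rewrite strict_X3_zero, D3 in Ax, Ay. rewrite strict_X3_zero in Ex, Ey.
  destruct (rotation_kernel z (partial cx (X cx) p) (partial cx (X cy) p)) as [Hxx Hxy]; [lra|lra|].
  destruct (rotation_kernel z (partial cy (X cx) p) (partial cy (X cy) p)) as [Hyx Hyy]; [lra|lra|].
  destruct i, j; auto; congruence.
Qed.

Lemma strict_depends_on_z i x y z : X i ((x, y), z) = X i ((0, 0), z).
Proof.
  assert (Const : forall k q, k <> cz -> forall a b, X i (upd q k a) = X i (upd q k b)).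
  { intros k q Hk. apply (is_derive_zero_const (fun t => X i (upd q k t))). intros t.
    assert (D := smooth_is_derive (X i) k (upd q k t) (Xs i)).
    rewrite strict_partial_xy_zero, get_upd in D by auto.
    eapply is_derive_ext; [|exact D]. intros u; simpl. now rewrite upd_upd. }
  transitivity (X i ((0, y), z)).
  - apply (Const cx ((0, y), z)). discriminate.
  - apply (Const cy ((0, y), z)). discriminate.
Qed.

End StrictContact.

(** * Constant 2-forms are not exact *)

(* Integrating over the s-period, [t |-> int_0^2pi F s t ds] has constant derivative
   [2 pi k]; being periodic, that forces [k = 0]. *)
Lemma periodic_curl_const_zero (F G : R -> R -> R) k :
  (forall s t, ex_derive (fun w => F s w) t) ->
  (forall s t, continuity_2d_pt (fun u v => Derive (fun w => F v w) u) s t) ->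
  (forall s t, continuous (fun w => F w t) s) ->
  (forall s t, ex_derive (fun w => G w t) s) ->
  (forall s t, continuous (fun w => Derive (fun w' => G w' t) w) s) ->
  (forall s t, F s (t + 2 * PI) = F s t) ->
  (forall s t, G (s + 2 * PI) t = G s t) ->
  (forall s t, Derive (fun w => F s w) t - Derive (fun w => G w t) s = k) ->
  k = 0.
Proof.
  intros HF1 HF2 HF3 HG1 HG2 PF PG Hk.
  assert (HPI := PI_RGT_0).
  set (Psi t := RInt (fun s => F s t) 0 (2 * PI)).
  assert (D : forall t, is_derive Psi t (2 * PI * k)).
  { intros t.
    assert (D := is_derive_RInt_param (fun u s => F s u) 0 (2 * PI) t
      (filter_forall _ (fun _ s _ => HF1 s _)) (fun s _ => HF2 t s)
      (filter_forall _ (fun _ => ex_RInt_continuous (V := R_CompleteNormedModule) _ _ _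
         (fun s _ => HF3 s _)))).
    match type of D with is_derive _ _ ?v => replace (2 * PI * k) with v; [exact D|] end.
    rewrite (RInt_ext _ (fun s => plus k (Derive (fun w => G w t) s)))
      by (intros s _; unfold plus; simpl; rewrite <- (Hk s t); ring).
    rewrite (RInt_plus (V := R_CompleteNormedModule)), (RInt_const (V := R_CompleteNormedModule)),
      (RInt_Derive (fun w => G w t)), <- (PG 0 t), Rplus_0_l.
    - unfold scal, plus; simpl; unfold mult; simpl. ring.
    - intros; apply HG1.
    - intros; apply HG2.
    - apply ex_RInt_const.
    - apply (ex_RInt_continuous (V := R_CompleteNormedModule)). intros; apply HG2. }
  assert (C : Psi (2 * PI) - 2 * PI * k * (2 * PI) = Psi 0 - 2 * PI * k * 0).
  { apply (is_derive_zero_const (fun t => Psi t - 2 * PI * k * t)). intros t.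
    assert (D' := is_derive_minus _ _ t _ _ (D t)
      (is_derive_scal (fun t => t) t (2 * PI * k) 1 (is_derive_id t))).
    match type of D' with is_derive _ _ ?v => replace 0 with v; [exact D'|] end.
    unfold minus, plus, opp; simpl. ring. }
  assert (E : Psi (2 * PI) = Psi 0).
  { unfold Psi. apply RInt_ext. intros s _. rewrite <- (PF s 0). f_equal. ring. }
  rewrite E in C. assert (0 < 2 * PI * (2 * PI)) by nra. nra.
Qed.

Lemma d1_plane_const_zero (g : Defs.form1) a b k : a <> b -> is_form1 g ->
  (forall p, partial a (g b) p - partial b (g a) p = k) -> k = 0.
Proof.
  intros Hab Hg Hk.
  assert (Hba : b <> a) by auto.
  destruct (Hg a) as [Sa Pa]. destruct (Hg b) as [Sb Pb].
  set (o := ((0, 0), 0) : pt).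
  apply (periodic_curl_const_zero (fun s t => g b (plane o b a s t))
                                  (fun s t => g a (plane o b a s t)) k).
  - intros s t. apply ex_derive_plane_r; auto.
  - intros s t.
    apply (continuity_2d_pt_ext (fun u v => partial a (g b) (plane o a b u v))).
    + intros u v. rewrite Derive_plane_r. unfold plane. rewrite (upd_swap o) by auto. reflexivity.
    + apply continuity_2d_plane, smooth_partial, Sb.
  - intros s t. apply continuous_plane_l, Sb.
  - intros s t. apply ex_derive_plane_l; auto.
  - intros s t. apply (continuous_ext (fun w => partial b (g a) (plane o b a w t))).
    + intros w. symmetry. apply Derive_plane_l; auto.
    + apply continuous_plane_l, smooth_partial, Sa.
  - intros s t. pose proof (Pb (plane o b a s t) a) as P.
    rewrite get_plane_r, upd_plane_r in P. exact P.
  - intros s t. pose proof (Pa (plane o b a s t) b) as P.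
    rewrite get_plane_l, upd_plane_l in P by auto. exact P.
  - intros s t. rewrite Derive_plane_r, Derive_plane_l by auto. apply Hk.
Qed.

Lemma d1_const_zero (g : Defs.form1) j k : is_form1 g -> (forall p, Defs.d1 g j p = k) -> k = 0.
Proof.
  intros Hg Hk. destruct j; simpl in Hk.
  - apply (d1_plane_const_zero g cy cz); auto; discriminate.
  - apply (d1_plane_const_zero g cz cx); auto; discriminate.
  - apply (d1_plane_const_zero g cx cy); auto; discriminate.
Qed.

(** * Periodic primitives *)

Definition mean (v : R -> R) : R := RInt v 0 (2 * PI) / (2 * PI).

Lemma smooth1_affine (v : R -> R) k m : smooth1 v -> smooth1 (fun t => k * (v t - m)).
Proof.
  intros Hv.
  assert (Ev : forall z, ex_derive v z) by apply (proj1 (Hv 0%nat)).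
  assert (E : forall n z, Derive_n (fun t => k * (v t - m)) (S n) z = k * Derive_n v (S n) z).
  { induction n as [|n IH]; intros z; simpl.
    - rewrite Derive_scal, Derive_minus, Derive_const; auto using ex_derive_const.
      rewrite Rminus_0_r. reflexivity.
    - rewrite (Derive_ext _ (fun t => k * Derive_n v (S n) t)) by apply IH. apply Derive_scal. }
  intros [|n]; simpl; split; intros z.
  - apply ex_derive_scal, (ex_derive_minus v (fun _ => m)); auto using ex_derive_const.
  - apply (continuous_mult (fun _ => k) (fun t => v t - m)); [apply continuous_const|].
    apply (continuous_minus v (fun _ => m)); [apply (proj2 (Hv 0%nat))|apply continuous_const].
  - eapply ex_derive_ext; [intros t; symmetry; apply E|]. apply ex_derive_scal, Hv.
  - eapply continuous_ext; [intros t; symmetry; apply E|].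
    apply (continuous_mult (fun _ => k) (Derive_n v (S n))); [apply continuous_const|apply Hv].
Qed.

Lemma smooth1_antiderivative (U w : R -> R) :
  smooth1 w -> (forall z, is_derive U z (w z)) -> smooth1 U.
Proof.
  intros Hw DU [|n].
  - simpl. split; intros z; [exists (w z); auto|].
    exact (ex_derive_continuous U z (ex_intro _ _ (DU z))).
  - assert (E : forall z, Derive_n U (S n) z = Derive_n w n z).
    { intros z. replace (S n) with (n + 1)%nat by lia. rewrite <- (Derive_n_comp U n 1).
      apply Derive_n_ext. intros t. simpl. apply is_derive_unique, DU. }
    split; intros z.
    + eapply ex_derive_ext; [intros t; symmetry; apply E|apply Hw].
    + eapply continuous_ext; [intros t; symmetry; apply E|apply Hw].
Qed.

Lemma is_derive_RInt_0 (w : R -> R) z :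
  (forall z, continuous w z) -> is_derive (fun z => RInt w 0 z) z (w z).
Proof.
  intros Cw. apply is_derive_RInt with (a := 0); auto. apply filter_forall. intros b.
  apply RInt_correct, (ex_RInt_continuous (V := R_CompleteNormedModule)); auto.
Qed.

Lemma RInt_periodic_primitive (w : R -> R) : (forall z, continuous w z) ->
  (forall t, w (t + 2 * PI) = w t) -> RInt w 0 (2 * PI) = 0 ->
  forall t, RInt w 0 (t + 2 * PI) = RInt w 0 t.
Proof.
  intros Cw Pw I0.
  set (U z := RInt w 0 z).
  assert (DU : forall z, is_derive U z (w z)) by (intros; apply is_derive_RInt_0; auto).
  assert (Step : forall a b, U (a + 2 * PI) - U a = U (b + 2 * PI) - U b).
  { intros a b. apply (is_derive_zero_const (fun t => U (t + 2 * PI) - U t)). intros t.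
    assert (D := is_derive_minus _ _ t _ _
      (is_derive_comp U (fun t => t + 2 * PI) t _ _ (DU _) (is_derive_plus _ _ t _ _
        (is_derive_id t) (is_derive_const (2 * PI) t))) (DU t)).
    match type of D with is_derive _ _ ?v => replace 0 with v; [exact D|] end.
    rewrite Pw. unfold minus, plus, opp, scal, one, zero; simpl. unfold mult; simpl. ring. }
  intros t. specialize (Step t 0). unfold U in Step.
  rewrite Rplus_0_l, I0, RInt_point in Step. unfold zero in Step; simpl in Step. unfold U. lra.
Qed.

Lemma RInt_sub_mean (v : R -> R) : (forall z, continuous v z) ->
  RInt (fun t => v t - mean v) 0 (2 * PI) = 0.
Proof.
  intros Cv.
  rewrite (RInt_ext _ (fun t => minus (v t) (mean v))) by reflexivity.
  rewrite (RInt_minus (V := R_CompleteNormedModule)), (RInt_const (V := R_CompleteNormedModule)).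
  - unfold mean, minus, plus, opp, scal; simpl. unfold mult; simpl. field. apply PI_neq0.
  - apply (ex_RInt_continuous (V := R_CompleteNormedModule)); auto.
  - apply ex_RInt_const.
Qed.

(* The primitive of a periodic function is periodic exactly when its mean vanishes. *)
Lemma periodic_primitive (v : R -> R) k : smooth1 v -> (forall t, v (t + 2 * PI) = v t) ->
  exists U, smooth1 U /\ (forall t, U (t + 2 * PI) = U t) /\
    forall z, is_derive U z (k * (v z - mean v)).
Proof.
  intros Hv Pv.
  set (w t := k * (v t - mean v)).
  assert (Hw : smooth1 w) by apply smooth1_affine, Hv.
  assert (Cw : forall z, continuous w z) by apply (proj2 (Hw 0%nat)).
  assert (DU : forall z, is_derive (fun z => RInt w 0 z) z (w z))
    by (intros; apply is_derive_RInt_0; auto).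
  exists (fun z => RInt w 0 z). split; [|split; [|exact DU]].
  - exact (smooth1_antiderivative _ w Hw DU).
  - apply RInt_periodic_primitive; auto.
    + intros t. unfold w. now rewrite Pv.
    + unfold w. rewrite (RInt_ext _ (fun t => scal k (v t - mean v))) by reflexivity.
      rewrite (RInt_scal (V := R_CompleteNormedModule)), RInt_sub_mean.
      * unfold scal; simpl; unfold mult; simpl. ring.
      * apply (proj2 (Hv 0%nat)).
      * apply (ex_RInt_minus v (fun _ => mean v)); [|apply ex_RInt_const].
        apply (ex_RInt_continuous (V := R_CompleteNormedModule)). intros; apply (proj2 (Hv 0%nat)).
Qed.

(** * The Reeb flow *)

Lemma reeb_field Rb : is_reeb Rb -> forall x y z,
  Rb cx ((x, y), z) = cos z /\ Rb cy ((x, y), z) = sin z /\ Rb cz ((x, y), z) = 0.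
Proof.
  intros [_ [H1 H2]] x y z.
  specialize (H1 ((x, y), z)). unfold ins1, sum3 in H1. simpl in H1.
  assert (A := H2 cx ((x, y), z)). assert (B := H2 cy ((x, y), z)).
  assert (C := H2 cz ((x, y), z)).
  unfold ins2 in A, B, C. rewrite !d1_theta in A, B, C.
  assert (S := sin2_cos2 z). unfold Rsqr in S.
  destruct (rotation_kernel z (Rb cz ((x, y), z)) 0) as [Hc _]; [lra|lra|].
  destruct (rotation_kernel z (Rb cx ((x, y), z) - cos z) (Rb cy ((x, y), z) - sin z))
    as [Ha Hb]; [lra|nra|].
  repeat split; lra.
Qed.

Lemma Zsqr_eq_3_mul_sqr (k m : Z) : (m * m = 3 * k * k)%Z -> k = 0%Z.
Proof.
  intros E. destruct (Z.eq_dec k 0) as [|Hk]; auto. exfalso.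
  assert (Descent : forall n k m,
    (Z.abs_nat k <= n)%nat -> k <> 0%Z -> (m * m = 3 * k * k)%Z -> False).
  { clear. induction n as [|n IH]; intros k m Hn Hk E; [lia|].
    (* 3 divides m^2, hence m = 3 q, and then k^2 = 3 q^2 with |q| < |k| *)
    assert (Hd := Z.div_mod m 3 ltac:(lia)). assert (Hr := Z.mod_pos_bound m 3 ltac:(lia)).
    set (q := (m / 3)%Z) in *. set (r := (m mod 3)%Z) in *.
    assert (Hr0 : r = 0%Z).
    { destruct (Z.eq_dec r 0) as [|Hr1]; auto. exfalso.
      assert (r = 1 \/ r = 2)%Z as [-> | ->] by lia; rewrite Hd in E; nia. }
    rewrite Hr0 in Hd. rewrite Hd in E.
    assert (E2 : (k * k = 3 * q * q)%Z) by nia.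
    assert (Hq : q <> 0%Z) by (intros Hq0; rewrite Hq0 in E2; nia).
    apply (IH q k); auto. assert (Z.abs q < Z.abs k)%Z by nia. lia. }
  exact (Descent _ k m (Nat.le_refl _) Hk E).
Qed.

(* At height z = pi/3 the Reeb flow is a line of slope sqrt 3 in the (x, y)-torus. *)
Lemma reeb_orbit_not_closed : has_nonclosed_reeb_orbit.
Proof.
  intros Rb HR.
  exists (fun t => ((t * / 2, t * (sqrt 3 / 2)), PI / 3)). split.
  - intros t i. destruct (reeb_field Rb HR (t * / 2) (t * (sqrt 3 / 2)) (PI / 3)) as [A [B C]].
    destruct i; simpl.
    + rewrite A, cos_PI3. auto_derive; auto.
    + rewrite B, sin_PI3. auto_derive; auto. ring.
    + rewrite C. auto_derive; auto.
  - intros t Ht. apply NNPP. intros Hn.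
    assert (Hx : exists k1 : Z, t * / 2 - 0 * / 2 = 2 * PI * IZR k1).
    { apply NNPP; intros H. apply Hn. exists cx. intros k Hk. apply H. exists k. exact Hk. }
    assert (Hy : exists k2 : Z, t * (sqrt 3 / 2) - 0 * (sqrt 3 / 2) = 2 * PI * IZR k2).
    { apply NNPP; intros H. apply Hn. exists cy. intros k Hk. apply H. exists k. exact Hk. }
    destruct Hx as [k1 E1], Hy as [k2 E2].
    assert (HPI := PI_RGT_0).
    assert (Et : t = 4 * PI * IZR k1) by lra.
    assert (Hk1 : k1 <> 0%Z) by (intros H0; rewrite H0 in Et; simpl in Et; lra).
    apply Hk1, (Zsqr_eq_3_mul_sqr k1 k2), eq_IZR. rewrite !mult_IZR.
    assert (E3 : sqrt 3 * IZR k1 = IZR k2).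
    { apply Rmult_eq_reg_l with (2 * PI); [|lra]. rewrite <- E2, Et. field. }
    rewrite <- E3.
    replace (sqrt 3 * IZR k1 * (sqrt 3 * IZR k1)) with (sqrt 3 * sqrt 3 * IZR k1 * IZR k1) by ring.
    rewrite sqrt_sqrt by lra. ring.
Qed.

(** * The flux map *)

Lemma ins3_mu X i p : ins3 X mu i p = - / 2 * X i p.
Proof. unfold ins3. now rewrite mu_const. Qed.

Lemma exact2_ext (w1 w2 : Defs.form2) : (forall i p, w1 i p = w2 i p) -> exact2 w1 -> exact2 w2.
Proof. intros E [a [Ha Hd]]. exists a. split; auto. intros; rewrite <- E; auto. Qed.

Lemma exact2_zero : exact2 (fun _ _ => 0).
Proof.
  exists (fun _ _ => 0). split; [intros i; apply tfun_const|].
  intros [| |] p; simpl; rewrite !partial_const; ring.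
Qed.

Lemma exact2_sub (w1 w2 : Defs.form2) :
  exact2 w1 -> exact2 w2 -> exact2 (fun i p => w1 i p - w2 i p).
Proof.
  intros [a [Ha Ea]] [b [Hb Eb]].
  exists (fun i p => a i p + (-1) * b i p). split; [intros i; apply tfun_lin; auto|].
  intros j p. rewrite Ea, Eb.
  destruct j; simpl; rewrite !partial_lin by (apply Ha || apply Hb); ring.
Qed.

Lemma exact2_const_zero (k : coord -> R) : exact2 (fun i _ => k i) -> forall i, k i = 0.
Proof. intros [g [Hg E]] i. apply (d1_const_zero g i (k i) Hg). intros p. now rewrite <- E. Qed.

Definition const_field (c1 c2 : R) : vfield :=
  fun i _ => match i with cx => c1 | cy => c2 | cz => 0 end.

Lemma const_field_strict c1 c2 : strict_contact (const_field c1 c2).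
Proof.
  split; [intros [| |]; unfold const_field; apply tfun_const|].
  intros j [[x y] z]. unfold lie1, sum3. rewrite !partial_theta.
  unfold const_field. rewrite !partial_const. destruct j; simpl; ring.
Qed.

Lemma tfun_vlin X a b i : tfun (X i) -> tfun (vlin X a b i).
Proof.
  intros HXi.
  set (o := ((0, 0), 0) : pt).
  replace (vlin X a b i) with (fun q => X i q + (-1) * (fun _ : pt => a * dX i o + b * dY i o) q)
    by (apply functional_extensionality; intros q; unfold vlin; destruct i; simpl; ring).
  apply tfun_lin; [exact HXi|apply tfun_const].
Qed.

Lemma partial_vlin X a b i j p : smooth (X i) -> partial j (vlin X a b i) p = partial j (X i) p.
Proof.
  intros Hs.
  rewrite (partial_ext _ (fun q => X i q + (-1) * (fun _ => a * dX i p + b * dY i p) q)).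
  - rewrite partial_lin, partial_const by (auto; apply tfun_const). ring.
  - intros q. unfold vlin. destruct i; simpl; ring.
Qed.

Lemma vlin_strict X a b : strict_contact X -> strict_contact (vlin X a b).
Proof.
  intros HX. split; [intros i; apply tfun_vlin, HX|].
  intros j [[x y] z]. rewrite <- (proj2 HX j ((x, y), z)).
  unfold lie1, sum3. rewrite !partial_vlin by apply HX. rewrite !partial_theta.
  unfold vlin. destruct j; simpl; ring.
Qed.

(* A strict contact field is [(u1 z, u2 z, 0)], so [i_X mu = -1/2 (u1 dy^dz + u2 dz^dx)] is
   [d(U2 dx + U1 dy)] up to the constant form given by the means of [u1] and [u2]. *)
Lemma strict_flux_exact_shift X : strict_contact X -> exists a b, exact2 (ins3 (vlin X a b) mu).
Proof.
  intros HX.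
  set (u1 z := X cx ((0, 0), z)). set (u2 z := X cy ((0, 0), z)).
  assert (S1 : smooth1 u1) by apply smooth1_z_slice, HX.
  assert (S2 : smooth1 u2) by apply smooth1_z_slice, HX.
  assert (P1 : forall t, u1 (t + 2 * PI) = u1 t)
    by (intros t; exact (proj2 (proj1 HX cx) ((0, 0), t) cz)).
  assert (P2 : forall t, u2 (t + 2 * PI) = u2 t)
    by (intros t; exact (proj2 (proj1 HX cy) ((0, 0), t) cz)).
  destruct (periodic_primitive u1 (/ 2) S1 P1) as [U1 [SU1 [PU1 DU1]]].
  destruct (periodic_primitive u2 (- / 2) S2 P2) as [U2 [SU2 [PU2 DU2]]].
  exists (mean u1), (mean u2),
    (fun i p => match i with cx => U2 (get p cz) | cy => U1 (get p cz) | cz => 0 end).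
  split.
  - intros [| |]; [exact (tfun_zfun U2 SU2 PU2)|exact (tfun_zfun U1 SU1 PU1)|apply tfun_const].
  - intros i [[x y] z]. rewrite ins3_mu. unfold vlin. rewrite (strict_depends_on_z X HX).
    destruct i; simpl Defs.d1; rewrite ?partial_const, ?partial_zfun.
    + rewrite (is_derive_unique _ _ _ (DU1 z)). unfold u1. simpl. ring.
    + rewrite (is_derive_unique _ _ _ (DU2 z)). unfold u2. simpl. ring.
    + rewrite (strict_X3_zero X HX). simpl. ring.
Qed.

Lemma strict_bracket_zero X Y : strict_contact X -> strict_contact Y ->
  bracket X Y = const_field 0 0.
Proof.
  intros HX HY. apply functional_extensionality; intros j.
  apply functional_extensionality; intros p.
  unfold bracket, sum3.
  rewrite !(strict_partial_xy_zero X HX j), !(strict_partial_xy_zero Y HY j),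
    (strict_X3_zero X HX), (strict_X3_zero Y HY) by discriminate.
  destruct j; simpl; ring.
Qed.

Lemma exact2_shift_unique X a b a' b' :
  exact2 (ins3 (vlin X a b) mu) -> exact2 (ins3 (vlin X a' b') mu) -> a' = a /\ b' = b.
Proof.
  intros H H'.
  set (k i := match i with cx => / 2 * (a - a') | cy => / 2 * (b - b') | cz => 0 end).
  assert (Hk : exact2 (fun i _ => k i)).
  { eapply exact2_ext; [|exact (exact2_sub _ _ H H')].
    intros i p. simpl. rewrite !ins3_mu. unfold vlin, k. destruct i; simpl; ring. }
  assert (Kx := exact2_const_zero k Hk cx). assert (Ky := exact2_const_zero k Hk cy).
  unfold k in Kx, Ky. lra.
Qed.

Lemma zero_field_exact_strict : exact_strict_contact (const_field 0 0).
Proof.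
  split; [apply const_field_strict|].
  eapply exact2_ext; [|exact exact2_zero]. intros i p. rewrite ins3_mu. destruct i; simpl; ring.
Qed.

Lemma strict_flux_class X : strict_contact X -> exists a b, exact2 (flin (ins3 X mu) a b).
Proof.
  intros HX. destruct (strict_flux_exact_shift X HX) as [a [b H]].
  exists (- a / 2), (b / 2). eapply exact2_ext; [|exact H].
  intros i p. unfold flin. rewrite !ins3_mu. unfold vlin. destruct i; simpl; field.
Qed.

Lemma const_field_flux_class a b : exact2 (flin (ins3 (const_field (-2 * a) (2 * b)) mu) a b).
Proof.
  eapply exact2_ext; [|exact exact2_zero]. intros i p. unfold flin. rewrite ins3_mu.
  destruct i; simpl; field.
Qed.

Lemma flin_zero_exact a b : exact2 (flin (fun _ _ => 0) a b) -> a = 0 /\ b = 0.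
Proof.
  intros H.
  set (k i := flin (fun _ _ => 0) a b i ((0, 0), 0)).
  assert (Hk : exact2 (fun i _ => k i))
    by (eapply exact2_ext; [|exact H]; intros [| |] p; reflexivity).
  assert (Kx := exact2_const_zero k Hk cx). assert (Ky := exact2_const_zero k Hk cy).
  unfold k, flin in Kx, Ky. simpl in Kx, Ky. lra.
Qed.

Theorem mainTheorem4 :
  is_contact theta /\ has_nonclosed_reeb_orbit /\
  strict_contact dX /\ strict_contact dY /\
  (forall X, strict_contact X ->
     exists a b, exact_strict_contact (vlin X a b) /\
       forall a' b', exact_strict_contact (vlin X a' b') -> a' = a /\ b' = b) /\
  (forall X Y, strict_contact X -> exact_strict_contact Y ->
     exact_strict_contact (bracket X Y)) /\
  (forall X, strict_contact X -> exists a b, exact2 (flin (ins3 X mu) a b)) /\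
  (forall a b, exists X, strict_contact X /\ exact2 (flin (ins3 X mu) a b)) /\
  (forall a b, exact2 (flin (fun _ _ => 0) a b) -> a = 0 /\ b = 0).
Proof.
  split; [exact theta_contact|]. split; [exact reeb_orbit_not_closed|].
  split; [exact (const_field_strict 1 0)|]. split; [exact (const_field_strict 0 1)|].
  split.
  { intros X HX. destruct (strict_flux_exact_shift X HX) as [a [b Hab]].
    exists a, b. split; [split; [apply vlin_strict|]; auto|].
    intros a' b' [_ H']. exact (exact2_shift_unique X a b a' b' Hab H'). }
  split.
  { intros X Y HX [HY _]. rewrite strict_bracket_zero by auto. exact zero_field_exact_strict. }
  split; [exact strict_flux_class|].
  split; [|exact flin_zero_exact].
  intros a b. exists (const_field (-2 * a) (2 * b)).
  split; [apply const_field_strict|apply const_field_flux_class].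
Qed.
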